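(* Let $A\in\mathbb{Z}^{d\times n}$ be totally unimodular, $\mathbf{b}\in\mathbb{Z}^d$, $\mathbf{c}\in\mathbb{Z}^n$, $\mathbf{u}\in\mathbb{Z}_{\ge0}^n$, and consider the ILP $\min\{\mathbf{c}^\top\mathbf{x} : A\mathbf{x}=\mathbf{b},\ \mathbf{0}\le\mathbf{x}\le\mathbf{u},\ \mathbf{x}\in\mathbb{Z}^n\}$. Let $m$ be the number of distinct positive values of $-\mathbf{c}^\top\mathbf{z}/\|\mathbf{z}\|_1$ as $\mathbf{z}$ ranges over $\mathcal{C}(A)$. Then from any feasible solution, every sequence of discrete steepest-descent augmentations (with respect to $\mathcal{G}(A)$) reaches an optimal solution after at most $n\cdot m$ augmentations.
   Context: The circuits $\mathcal{C}(A)$: for each nonzero $\mathbf{z}\in\ker(A)$ with inclusion-minimal support among nonzero vectors of $\ker(A)$, the line $\mathbb{R}\mathbf{z}$ contains exactly two nonzero integer points closest to the origin; $\mathcal{C}(A)$ is the set of all these vectors. For $\mathbf{v},\mathbf{w}\in\mathbb{R}^n$ write $\mathbf{v}\sqsubseteq\mathbf{w}$ if $v_iw_i\ge0$ and $|v_i|\le|w_i|$ for all $i$; the Graver basis $\mathcal{G}(A)$ is the set of $\sqsubseteq$-minimal elements of $(\ker(A)\cap\mathbb{Z}^n)\setminus\{\mathbf{0}\}$. Discrete steepest-descent augmentation (ILP): given a feasible $\mathbf{x}_k$, choose $\mathbf{z}\in\mathcal{G}(A)$ maximizing $-\mathbf{c}^\top\mathbf{z}/\|\mathbf{z}\|_1$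 among all $\mathbf{z}\in\mathcal{G}(A)$ with $\mathbf{x}_k+\mathbf{z}$ feasible; if this maximum is positive, let $\alpha$ be the largest integer with $\mathbf{x}_k+\alpha\mathbf{z}$ feasible and set $\mathbf{x}_{k+1}:=\mathbf{x}_k+\alpha\mathbf{z}$, otherwise stop. *)

From HB Require Import structures.
From mathcomp Require Import all_boot all_order all_algebra.
Set Implicit Arguments. Unset Strict Implicit. Unset Printing Implicit Defensive.
Import Order.TTheory GRing.Theory Num.Theory.
Local Open Scope ring_scope.

Definition totally_unimodular (d n : nat) (A : 'M[int]_(d, n)) : Prop :=
  forall (k : nat) (f : 'I_k -> 'I_d) (g : 'I_k -> 'I_n),
    injective f -> injective g ->
    \det (mxsub f g A) \in [:: -1; 0; 1].

Definition sd_in_ker (d n : nat) (A : 'M[int]_(d, n)) (z : 'cV[int]_n) : Prop :=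
  A *m z = 0.

Definition sd_supp_sub (n : nat) (w z : 'cV[int]_n) : Prop :=
  forall i, w i 0 != 0 -> z i 0 != 0.

Definition sd_parallel (n : nat) (w z : 'cV[int]_n) : Prop :=
  forall i j, w i 0 * z j 0 = w j 0 * z i 0.

Definition sd_sqnorm (n : nat) (z : 'cV[int]_n) : int := \sum_i (z i 0) ^+ 2.

(* Circuits C(A): nonzero kernel vectors of inclusion-minimal support, which
   are integer points closest to the origin on their line. *)
Definition sd_circuit (d n : nat) (A : 'M[int]_(d, n)) (z : 'cV[int]_n) : Prop :=
  [/\ sd_in_ker A z, z != 0,
      (forall w : 'cV[int]_n, sd_in_ker A w -> w != 0 -> sd_supp_sub w z ->
         sd_supp_sub z w) &
      (forall y : 'cV[int]_n, y != 0 -> sd_parallel y z -> sd_sqnorm z <= sd_sqnorm y)].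

Definition sd_conf (n : nat) (v w : 'cV[int]_n) : Prop :=
  forall i, 0 <= v i 0 * w i 0 /\ `|v i 0| <= `|w i 0|.

Definition sd_graver (d n : nat) (A : 'M[int]_(d, n)) (z : 'cV[int]_n) : Prop :=
  [/\ sd_in_ker A z, z != 0 &
      forall w : 'cV[int]_n, sd_in_ker A w -> w != 0 -> sd_conf w z -> w = z].

Definition sd_norm1 (n : nat) (z : 'cV[int]_n) : int := \sum_i `|z i 0|.

Definition sd_cost (n : nat) (c z : 'cV[int]_n) : int := \sum_i c i 0 * z i 0.

Definition sd_ratio (n : nat) (c z : 'cV[int]_n) : rat :=
  ((- sd_cost c z)%:~R) / ((sd_norm1 z)%:~R).

Definition sd_feasible (d n : nat) (A : 'M[int]_(d, n)) (b : 'cV[int]_d)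
  (u x : 'cV[int]_n) : Prop :=
  A *m x = b /\ forall i, 0 <= x i 0 <= u i 0.

Definition sd_optimal (d n : nat) (A : 'M[int]_(d, n)) (b : 'cV[int]_d)
  (c u x : 'cV[int]_n) : Prop :=
  sd_feasible A b u x /\ forall y, sd_feasible A b u y -> sd_cost c x <= sd_cost c y.

Definition sd_step (d n : nat) (A : 'M[int]_(d, n)) (b : 'cV[int]_d)
  (c u x y : 'cV[int]_n) : Prop :=
  exists z : 'cV[int]_n,
    [/\ sd_graver A z, sd_feasible A b u (x + z),
        (forall z', sd_graver A z' -> sd_feasible A b u (x + z') ->
           sd_ratio c z' <= sd_ratio c z),
        0 < sd_ratio c z &
        exists alpha : int,
          [/\ sd_feasible A b u (x + alpha *: z),
              (forall beta : int, sd_feasible A b u (x + beta *: z) -> beta <= alpha) &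
              y = x + alpha *: z]].

Definition sd_stopped (d n : nat) (A : 'M[int]_(d, n)) (b : 'cV[int]_d)
  (c u x : 'cV[int]_n) : Prop :=
  ~ exists z : 'cV[int]_n,
      [/\ sd_graver A z, sd_feasible A b u (x + z) & 0 < sd_ratio c z].

From HB Require Import structures.
From mathcomp Require Import all_boot all_order all_algebra.
From mathcomp Require Import zify ring lra.
From Stdlib Require Import Classical.
Import Order.TTheory GRing.Theory Num.Theory.
Local Open Scope ring_scope.
Set Implicit Arguments. Unset Strict Implicit. Unset Printing Implicit Defensive.

(* For a totally unimodular [A] every Graver element is a circuit with entries in
   {-1, 0, 1}: Cramer's rule on a maximal nonsingular minor of a support-minimal kernel
   vector yields such a circuit, and subtracting multiples of it reduces any kernel
   vector conformally.  Decomposing a feasible move [h] from [x] conformally into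
   Graver elements gives [- c^T h <= delta * |h|_1], [delta] the steepest ratio at [x];
   with [delta <= 0] this is optimality, and for two consecutive augmentations it shows
   that the ratios never increase.  An augmentation [x + alpha g] with maximal [alpha]
   is stopped by a coordinate [i] where one more step leaves the box.  If [i] stopped
   two augmentations [k < k'] of equal ratio, it must have moved back at some step [l]
   in between, so [|x_(l+1) - x_k|_1] is strictly less than the total length of steps
   [k..l]; with all these ratios equal this contradicts the bound at [x_k].  So the
   pairs (ratio, stopping coordinate) are distinct, and there are at most [m n]. *)

Lemma ex_minimal (P : nat -> Prop) m0 : P m0 ->
  exists m, P m /\ forall m', (m' < m)%N -> ~ P m'.
Proof.
elim/ltn_ind: m0 => m0 IH Pm0.
case: (classic (exists2 m', (m' < m0)%N & P m')) => [[m' lt_m' Pm']|no_smaller].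
  exact: IH lt_m' Pm'.
by exists m0; split => // m' lt_m' Pm'; apply: no_smaller; exists m'.
Qed.

Lemma sgz_cases (r : int) :
  [\/ r = 0 /\ sgz r = 0, 0 < r /\ sgz r = 1 | r < 0 /\ sgz r = -1].
Proof. by case: sgzP => ?; [constructor 1 | constructor 2 | constructor 3]. Qed.

Lemma unit_intP (s : int) : `|s| <= 1 -> [\/ s = -1, s = 0 | s = 1].
Proof.
move=> ?; have : s = -1 \/ s = 0 \/ s = 1 by lia.
by case=> [|[|]]; [constructor 1 | constructor 2 | constructor 3].
Qed.

Lemma sign_agreeP {g h : int} :
  0 <= g * h -> (0 <= g /\ 0 <= h) \/ (g <= 0 /\ h <= 0).
Proof. by move=> ?; case: (lerP 0 h); case: (lerP 0 g); nia. Qed.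

Lemma conf_intB (g h : int) : 0 <= g * h -> `|g| <= `|h| ->
  0 <= (h - g) * h /\ `|h - g| <= `|h|.
Proof. by move=> gh; case: (sign_agreeP gh) => [[]|[]] ? ? ?; split; nia. Qed.

Lemma conf_int_normB (g h : int) : 0 <= g * h -> `|g| <= `|h| ->
  `|h - g| = `|h| - `|g|.
Proof. by move=> gh; case: (sign_agreeP gh) => [[]|[]] ? ? ?; nia. Qed.

Lemma conf_int_between (x h v u : int) : 0 <= x <= u -> 0 <= x + h <= u ->
  0 <= v * h -> `|v| <= `|h| -> 0 <= x + v <= u.
Proof. by move=> ? ? vh; case: (sign_agreeP vh) => [[]|[]] ? ? ?; nia. Qed.

Lemma conf_int_trans (a b c : int) : 0 <= a * b -> `|a| <= `|b| ->
  0 <= b * c -> `|b| <= `|c| -> 0 <= a * c.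
Proof.
move=> ab ? bc ?.
by case: (sign_agreeP ab) => [[]|[]] ? ?; case: (sign_agreeP bc) => [[]|[]] ? ?; nia.
Qed.

Lemma sign_agree_trans (p q r : int) :
  0 <= p * q -> 0 <= q * r -> (p != 0 -> q != 0) -> 0 <= p * r.
Proof. by move=> pq qr; case: (sign_agreeP pq) => _; nia. Qed.

Lemma conf_int_eq (a b : int) : 0 <= a * b -> `|a| = `|b| -> a = b.
Proof. by move=> ab ?; case: (sign_agreeP ab) => [[]|[]] ? ?; nia. Qed.

(** * Costs, 1-norms and conformal decompositions *)

Section Vectors.
Variable n : nat.
Implicit Types (c e g h v w z : 'cV[int]_n) (x : nat -> 'cV[int]_n).

Lemma sd_costD c v w : sd_cost c (v + w) = sd_cost c v + sd_cost c w.
Proof. by rewrite /sd_cost -big_split; apply: eq_bigr => i _; rewrite mxE mulrDr. Qed.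

Lemma sd_costN c v : sd_cost c (- v) = - sd_cost c v.
Proof. by rewrite /sd_cost -sumrN; apply: eq_bigr => i _; rewrite mxE mulrN. Qed.

Lemma sd_costB c v w : sd_cost c (v - w) = sd_cost c v - sd_cost c w.
Proof. by rewrite sd_costD sd_costN. Qed.

Lemma sd_costZ c v a : sd_cost c (a *: v) = a * sd_cost c v.
Proof. by rewrite /sd_cost mulr_sumr; apply: eq_bigr => i _; rewrite mxE mulrCA. Qed.

Lemma sd_cost0 c : sd_cost c 0 = 0.
Proof. by rewrite /sd_cost big1 // => i _; rewrite mxE mulr0. Qed.

Lemma sd_norm1_ge0 v : 0 <= sd_norm1 v.
Proof. by apply: sumr_ge0 => i _; apply: normr_ge0. Qed.

Lemma sd_norm10 : sd_norm1 (0 : 'cV[int]_n) = 0.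
Proof. by rewrite /sd_norm1 big1 // => i _; rewrite mxE normr0. Qed.

Lemma sd_norm1Z v a : sd_norm1 (a *: v) = `|a| * sd_norm1 v.
Proof. by rewrite /sd_norm1 mulr_sumr; apply: eq_bigr => i _; rewrite mxE normrM. Qed.

Lemma sd_norm1_eq0 v : (sd_norm1 v == 0) = (v == 0).
Proof.
apply/eqP/eqP => [v0|->]; last exact: sd_norm10.
apply/matrixP => i j; rewrite (ord1 j) mxE; apply/eqP; rewrite -normr_eq0.
exact/eqP/(psumr_eq0P (fun i _ => normr_ge0 (v i 0)) v0).
Qed.

Lemma sd_norm1_gt0 v : (0 < sd_norm1 v) = (v != 0).
Proof. by rewrite lt_def sd_norm1_eq0 sd_norm1_ge0 andbT. Qed.

Lemma sd_norm1D v w : sd_norm1 (v + w) <= sd_norm1 v + sd_norm1 w.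
Proof. by rewrite /sd_norm1 -big_split; apply: ler_sum => i _; rewrite mxE ler_normD. Qed.

Lemma sd_norm1_lt_opposite v e w (i : 'I_n) : v i 0 * w i 0 < 0 ->
  sd_norm1 (v + e + w) < sd_norm1 v + sd_norm1 e + sd_norm1 w.
Proof.
move=> opp; rewrite /sd_norm1 -!big_split /= (bigD1 i) //= [ltRHS](bigD1 i) //=.
apply: ltr_leD.
  have signs : (0 < v i 0 /\ w i 0 < 0) \/ (v i 0 < 0 /\ 0 < w i 0).
    by case: (ltrgtP (v i 0) 0) => ?; nia.
  rewrite !mxE; move: signs; move: (v i 0) (e i 0) (w i 0) => p q r; lia.
apply: ler_sum => j _; rewrite !mxE.
by apply: le_trans (ler_normD _ _) _; rewrite lerD2r ler_normD.
Qed.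

Lemma sd_norm1_telescope x k l : (k <= l)%N ->
  sd_norm1 (x l - x k) <= \sum_(k <= m < l) sd_norm1 (x m.+1 - x m).
Proof.
elim: l => [|l IH]; first by rewrite leqn0 => /eqP ->; rewrite big_geq // subrr sd_norm10.
rewrite leq_eqVlt => /orP [/eqP ->|lt_kl]; first by rewrite big_geq // subrr sd_norm10.
rewrite big_nat_recr //= -[x l.+1 - x k](subrKA (x l)) addrC.
by apply: le_trans (sd_norm1D _ _) _; rewrite lerD2l IH.
Qed.

Lemma sd_ratioK c z : (- sd_cost c z)%:~R = sd_ratio c z * (sd_norm1 z)%:~R.
Proof.
rewrite /sd_ratio; have [->|nz] := eqVneq z 0.
  by rewrite sd_cost0 sd_norm10 oppr0 !mulr0.
by rewrite divfK // intr_eq0 sd_norm1_eq0.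
Qed.

Lemma sd_ratioZ c z (a : int) : 0 < a -> sd_ratio c (a *: z) = sd_ratio c z.
Proof.
move=> a_gt0; rewrite /sd_ratio sd_costZ sd_norm1Z gtr0_norm // -mulrN !intrM.
by rewrite -mulf_div divff ?mul1r // intr_eq0 gt_eqF.
Qed.

Lemma sd_ratio_gt0_neq0 c z : 0 < sd_ratio c z -> z != 0.
Proof.
by move=> pos; apply/eqP => z0; move: pos; rewrite z0 /sd_ratio sd_cost0 oppr0 mul0r ltxx.
Qed.

Lemma sd_conf_trans v w z : sd_conf v w -> sd_conf w z -> sd_conf v z.
Proof.
move=> vw wz i; have [vw1 vw2] := vw i; have [wz1 wz2] := wz i.
by split; [exact: conf_int_trans vw1 vw2 wz1 wz2 | exact: le_trans vw2 wz2].
Qed.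

Lemma sd_conf_subr g h : sd_conf g h -> sd_conf (h - g) h.
Proof. by move=> gh i; have [gh1 gh2] := gh i; rewrite !mxE; apply: conf_intB. Qed.

Lemma sd_norm1_conf_subr g h : sd_conf g h ->
  sd_norm1 (h - g) = sd_norm1 h - sd_norm1 g.
Proof.
move=> gh; rewrite /sd_norm1 -sumrB; apply: eq_bigr => i _; rewrite !mxE.
by have [gh1 gh2] := gh i; apply: conf_int_normB.
Qed.

End Vectors.

Section GraverDecomposition.
Variables (d n : nat) (A : 'M[int]_(d, n)) (b : 'cV[int]_d) (c u : 'cV[int]_n).

Lemma sd_feasible_kernel x y :
  sd_feasible A b u x -> sd_feasible A b u y -> A *m (y - x) = 0.
Proof. by move=> [Ax _] [Ay _]; rewrite mulmxBr Ax Ay subrr. Qed.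

Lemma sd_feasible_conf x h v : sd_feasible A b u x -> sd_feasible A b u (x + h) ->
  A *m v = 0 -> sd_conf v h -> sd_feasible A b u (x + v).
Proof.
move=> [Ax xb] [_ xhb] Av vh; split; first by rewrite mulmxDr Ax Av addr0.
move=> i; have [vh1 vh2] := vh i; have := xb i; have := xhb i; rewrite !mxE => xhi xi.
exact: conf_int_between xi xhi vh1 vh2.
Qed.

Lemma exists_graver_conf w : A *m w = 0 -> w != 0 ->
  exists g, sd_graver A g /\ sd_conf g w.
Proof.
move=> Aw nw.
have [m [[v [[Av nv vw] vm]] v_min]] := ex_minimal
  (P := fun m => exists v, [/\ A *m v = 0, v != 0 & sd_conf v w] /\ absz (sd_norm1 v) = m)
  (ex_intro _ w (conj (And3 Aw nw (fun i => conj (sqr_ge0 _) (lexx _))) erefl)).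
exists v; split => //; split => // v' Av' nv' v'v.
have v_le : sd_norm1 v <= sd_norm1 v'.
  rewrite leNgt; apply/negP => lt_v'v; apply: (v_min (absz (sd_norm1 v'))).
    by rewrite -vm; move: lt_v'v (sd_norm1_ge0 v'); lia.
  by exists v'; split => //; split => //; exact: sd_conf_trans v'v vw.
have norm_eq i : `|v' i 0| = `|v i 0|.
  have sum0 : \sum_i (`|v i 0| - `|v' i 0|) = 0.
    apply/eqP; rewrite eq_le; apply/andP; split; first by rewrite sumrB subr_le0.
    by apply: sumr_ge0 => j _; rewrite subr_ge0; case: (v'v j).
  apply/esym/eqP; rewrite -subr_eq0; apply/eqP.
  by apply: (psumr_eq0P _ sum0) => // j _; rewrite subr_ge0; case: (v'v j).
apply/matrixP => i j; rewrite (ord1 j); have [v'vi _] := v'v i.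
exact: conf_int_eq v'vi (norm_eq i).
Qed.

(* Peel off a Graver element [g] conformal to [h]: both [g] and [h - g] are again
   feasible moves from [x], and [|h|_1 = |g|_1 + |h - g|_1]. *)
Lemma sd_cost_graver_bound x (dl : rat) : sd_feasible A b u x ->
  (forall g, sd_graver A g -> sd_feasible A b u (x + g) -> sd_ratio c g <= dl) ->
  forall h, sd_feasible A b u (x + h) ->
  (- sd_cost c h)%:~R <= dl * (sd_norm1 h)%:~R.
Proof.
move=> Fx steep h; move: {2}(absz (sd_norm1 h)) (leqnn (absz (sd_norm1 h))) => m.
elim: m h => [|m IH] h hm Fh.
  have : sd_norm1 h == 0 by move: hm (sd_norm1_ge0 h); lia.
  by rewrite sd_norm1_eq0 => /eqP ->; rewrite sd_cost0 sd_norm10 oppr0 mulr0.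
have Ah : A *m h = 0 by rewrite -(sd_feasible_kernel Fx Fh) addrC addKr.
have [->|nh] := eqVneq h 0; first by rewrite sd_cost0 sd_norm10 oppr0 mulr0.
have [g [Gg gh]] := exists_graver_conf Ah nh; have [Ag ng _] := Gg.
have Fg := sd_feasible_conf Fx Fh Ag gh.
have hgE := sd_norm1_conf_subr gh.
have Fhg : sd_feasible A b u (x + (h - g)).
  by apply: sd_feasible_conf Fx Fh _ (sd_conf_subr gh); rewrite mulmxBr Ah Ag subrr.
have IHhg : (- sd_cost c (h - g))%:~R <= dl * (sd_norm1 (h - g))%:~R.
  by apply: IH Fhg; move: hm hgE (sd_norm1_gt0 g) (sd_norm1_ge0 (h - g)); rewrite ng; lia.
have gbound : (- sd_cost c g)%:~R <= dl * (sd_norm1 g)%:~R.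
  by rewrite sd_ratioK ler_wpM2r ?ler0z ?sd_norm1_ge0 ?steep.
have costE : - sd_cost c h = - sd_cost c g + - sd_cost c (h - g) by rewrite sd_costB; ring.
have normE : sd_norm1 h = sd_norm1 g + sd_norm1 (h - g) by rewrite hgE; ring.
by rewrite costE normE !intrD mulrDr lerD.
Qed.

Lemma sd_stopped_optimal x :
  sd_feasible A b u x -> sd_stopped A b c u x -> sd_optimal A b c u x.
Proof.
move=> Fx stop; split => // y Fy.
have steep g : sd_graver A g -> sd_feasible A b u (x + g) -> sd_ratio c g <= 0.
  by move=> Gg Fg; rewrite leNgt; apply/negP => pos; apply: stop; exists g.
have := sd_cost_graver_bound Fx steep (h := y - x); rewrite addrC subrK mul0r lerz0.
by rewrite sd_costB => /(_ Fy); lia.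
Qed.

End GraverDecomposition.

(** * Circuits of totally unimodular matrices *)

Lemma unit_mul_le1 (p q : int) : p * p = 1 -> q \in [:: -1; 0; 1] -> `|p * q| <= 1.
Proof. by rewrite !inE; nia. Qed.

Lemma det_block_unit (R : comNzRingType) k (M : 'M[R]_k) (v : 'cV_k) (r : 'rV_k)
    (a : 'M_1) :
  \det M * \det M = 1 ->
  \det (block_mx M v r a) = \det M * (a 0 0 - (r *m (\det M *: (\adj M *m v))) 0 0).
Proof.
move=> detM2; set dM := \det M.
have -> : block_mx M v r a = block_mx 1%:M 0 (dM *: (r *m \adj M)) 1%:M *m
    block_mx M v 0 (a - r *m (dM *: (\adj M *m v))).
  rewrite mulmx_block !mul1mx !mul0mx ?mulmx0 !addr0 ?add0r; congr block_mx.
    by rewrite -scalemxAl -mulmxA mul_adj_mx mul_mx_scalar scalerA detM2 scale1r.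
  by rewrite -scalemxAl -mulmxA scalemxAr addrC subrK.
by rewrite det_mulmx det_lblock det_ublock !det1 mul1r det_mx11 !mxE mul1r.
Qed.

Lemma adj_mul_col_mxsub (R : comNzRingType) k d n (A : 'M[R]_(d, n))
    (f : 'I_k -> 'I_d) (g : 'I_k -> 'I_n) (j0 : 'I_n) (t : 'I_k) :
  (\adj (mxsub f g A) *m (\col_s A (f s) j0)) t 0 =
  \det (mxsub f (fun s => if s == t then j0 else g s) A).
Proof.
rewrite (expand_det_col _ t) mxE; apply: eq_bigr => s _.
rewrite !mxE eqxx mulrC; congr (_ * _).
rewrite /cofactor; congr (_ * \det _); apply/matrixP => i j.
by rewrite !mxE eq_sym (negbTE (neq_lift _ _)).
Qed.

Definition ext_last k (T : Type) (g : 'I_k -> T) (j : T) : 'I_(k + 1) -> T :=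
  fun i => if split i is inl s then g s else j.

Lemma ext_last_inj k (T : eqType) (g : 'I_k -> T) (j : T) :
  injective g -> (forall t, g t != j) -> injective (ext_last g j).
Proof.
move=> injg gj i1 i2; rewrite /ext_last -[i1]splitK -[i2]splitK.
case: (split i1) => s1; case: (split i2) => s2; rewrite !unsplitK.
- by move/injg ->.
- by move=> E; move: (gj s1); rewrite E eqxx.
- by move=> E; move: (gj s2); rewrite E eqxx.
- by rewrite (ord1 s1) (ord1 s2).
Qed.

Lemma mxsub_ext_last (R : Type) k d n (A : 'M[R]_(d, n))
    (f : 'I_k -> 'I_d) (g : 'I_k -> 'I_n) (r : 'I_d) (j : 'I_n) :
  mxsub (ext_last f r) (ext_last g j) A =
  block_mx (mxsub f g A) (\col_s A (f s) j) (\row_t A r (g t)) (\matrix_(_, _) A r j).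
Proof.
apply/matrixP => i1 i2; rewrite mxE /ext_last -[i1]splitK -[i2]splitK.
case: (split i1) => s1; case: (split i2) => s2; rewrite !unsplitK.
- by rewrite block_mxEul mxE.
- by rewrite block_mxEur mxE.
- by rewrite block_mxEdl mxE.
- by rewrite block_mxEdr mxE.
Qed.

Lemma sum_delta_notin_image (R : pzSemiRingType) k n (g : 'I_k -> 'I_n) (a : 'I_k -> R)
    (i : 'I_n) :
  (forall t, g t != i) -> \sum_t a t * (i == g t)%:R = 0.
Proof. by move=> gi; apply: big1 => t _; rewrite eq_sym (negbTE (gi t)) mulr0. Qed.

Lemma sum_delta_image (R : pzSemiRingType) k n (g : 'I_k -> 'I_n) (a : 'I_k -> R)
    (t0 : 'I_k) :
  injective g -> \sum_t a t * (g t0 == g t)%:R = a t0.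
Proof.
move=> injg; rewrite (bigD1 t0) //= eqxx mulr1 big1 ?addr0 // => t /negbTE tt0.
by rewrite (inj_eq injg) eq_sym tt0 mulr0.
Qed.

Definition supp_size n (v : 'cV[int]_n) := #|[set i | v i 0 != 0]|.

Lemma supp_size_lt n (v w : 'cV[int]_n) (i : 'I_n) :
  sd_supp_sub v w -> w i 0 != 0 -> v i 0 = 0 -> (supp_size v < supp_size w)%N.
Proof.
move=> vw wi vi; apply: proper_card; apply/properP; split.
  by apply/subsetP => j; rewrite !inE; apply: vw.
by exists i; rewrite inE ?vi ?eqxx.
Qed.

Lemma conformal_reduction n (g w : 'cV[int]_n) (i1 i2 : 'I_n) :
  (forall i, `|w i 0| <= 1) -> sd_supp_sub w g ->
  0 < w i1 0 * g i1 0 -> w i2 0 * g i2 0 < 0 ->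
  exists t : int, [/\ g - t *: w != 0, forall i, 0 <= (g - t *: w) i 0 * g i 0,
    sd_supp_sub (g - t *: w) g & exists i0, g i0 0 != 0 /\ (g - t *: w) i0 0 = 0].
Proof.
move=> wb wg pos1 neg2.
(* [t] is the least [|g i|] over the coordinates where [w] agrees in sign with [g]. *)
have [i0 pos0 i0_min] :=
  @arg_minnP _ i1 (fun i => 0 < w i 0 * g i 0) (fun i => absz (g i 0)) pos1.
pose t := `|g i0 0|; have t_gt0 : 0 < t by rewrite normr_gt0; move: pos0; nia.
have hE i : (g - t *: w) i 0 = g i 0 - t * w i 0 by rewrite !mxE.
exists t; split.
- apply/eqP => /matrixP /(_ i2 0); rewrite hE mxE => h0.
  by case: (unit_intP (wb i2)) neg2 => wi; nia.
- move=> i; rewrite hE; have := i0_min i; have := wg i.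
  by case: (unit_intP (wb i)) => ->; rewrite /t; nia.
- move=> i; rewrite hE; have := wg i.
  by case: (unit_intP (wb i)) => ->; rewrite ?mulr0 ?subr0 //; lia.
- exists i0; split; first by move: pos0; nia.
  by rewrite hE; case: (unit_intP (wb i0)) pos0 => ->; rewrite /t; nia.
Qed.

Lemma unit_kernel_circuit d n (A : 'M[int]_(d, n)) (w : 'cV[int]_n) (j0 : 'I_n) :
  A *m w = 0 -> (forall i, `|w i 0| <= 1) -> w j0 0 * w j0 0 = 1 ->
  (forall v, A *m v = 0 -> v != 0 -> sd_supp_sub v w -> sd_supp_sub w v) ->
  sd_circuit A w.
Proof.
move=> Aw wb wj0 w_min; split => //.
  by apply/eqP => w0; move: wj0; rewrite w0 mxE mul0r => /eqP; rewrite eq_sym oner_eq0.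
move=> y ny yw.
have yE : y = (y j0 0 * w j0 0) *: w.
  by apply/matrixP => i j; rewrite (ord1 j) mxE -[LHS]mulr1 -wj0 mulrA yw; ring.
have s_neq0 : y j0 0 * w j0 0 != 0.
  by apply: contraNneq ny => s0; rewrite yE s0 scale0r.
rewrite yE /sd_sqnorm; under [leRHS]eq_bigr do rewrite mxE exprMn.
rewrite -mulr_sumr ler_peMl //; last by move: s_neq0; nia.
by apply: sumr_ge0 => i _; apply: sqr_ge0.
Qed.

Section TotallyUnimodular.
Variables (d n : nat) (A : 'M[int]_(d, n)).

Lemma exists_maximal_minor (S : pred 'I_n) :
  exists k (f : 'I_k -> 'I_d) (g : 'I_k -> 'I_n),
    [/\ injective f, injective g, (forall t, g t \in S), \det (mxsub f g A) != 0 &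
      forall (f' : 'I_(k + 1) -> 'I_d) (g' : 'I_(k + 1) -> 'I_n),
        injective f' -> injective g' -> (forall t, g' t \in S) ->
        \det (mxsub f' g' A) = 0].
Proof.
pose P k := exists (f : 'I_k -> 'I_d) (g : 'I_k -> 'I_n),
  [/\ injective f, injective g, forall t, g t \in S & \det (mxsub f g A) != 0].
have P0 : P 0%N.
  exists (ffun0 (card_ord 0)), (ffun0 (card_ord 0)).
  by split; [case | case | case | rewrite det_mx00 oner_neq0].
have P_le : forall k, P k -> (k <= n)%N.
  by move=> k [f [g [_ injg _ _]]]; have := leq_card g injg; rewrite !card_ord.
have [k [Pk nPk1]] : exists k, P k /\ ~ P (k + 1)%N.
  apply: NNPP => no_max.
  have Pall : forall m, P m.
    by elim => // m IH; apply: NNPP => Pm1; apply: no_max; exists m; rewrite addn1.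
  by have := P_le _ (Pall n.+1); rewrite ltnn.
have [f [g [injf injg gS detM]]] := Pk.
exists k, f, g; split => // f' g' injf' injg' g'S.
by apply/eqP; apply: contraT => det'; case: nPk1; exists f', g'.
Qed.

Lemma kernel_eq0_on_minor_columns k (f : 'I_k -> 'I_d) (g : 'I_k -> 'I_n)
    (z : 'cV[int]_n) :
  injective g -> \det (mxsub f g A) != 0 ->
  (forall j, z j 0 != 0 -> exists t, g t = j) -> A *m z = 0 -> z = 0.
Proof.
move=> injg detM in_g Az; set M := mxsub f g A in detM.
have zE : z = \sum_t z (g t) 0 *: delta_mx (g t) 0.
  apply/matrixP => i j; rewrite (ord1 j) summxE.
  under eq_bigr do rewrite !mxE eqxx andbT.
  case: (boolP [exists t, g t == i]) => [/existsP [t0 /eqP <-]|/existsPn not_gi].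
    by rewrite sum_delta_image.
  rewrite sum_delta_notin_image; last by move=> t; apply: not_gi.
  apply/eqP; apply: contraT => /in_g [t gt].
  by move: (not_gi t); rewrite gt eqxx.
pose zg : 'cV_k := \col_t z (g t) 0.
have Mzg : M *m zg = 0.
  apply/matrixP => s j; rewrite (ord1 j) [RHS]mxE.
  have := congr1 (fun X : 'M[int]_(d, 1) => X (f s) 0) Az.
  rewrite {1}zE mulmx_sumr summxE [RHS]mxE => <-.
  rewrite mxE; apply: eq_bigr => t _.
  by rewrite -scalemxAr -colE !mxE mulrC.
have zg0 : zg = 0.
  have := congr1 (mulmx (\adj M)) Mzg.
  rewrite mulmxA mul_adj_mx mul_scalar_mx mulmx0 => /eqP.
  by rewrite scalemx_eq0 (negbTE detM) /= => /eqP.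
rewrite zE big1 // => t _.
by have := congr1 (fun X : 'cV[int]_k => X t 0) zg0; rewrite !mxE => ->; rewrite scale0r.
Qed.

Hypothesis tuA : totally_unimodular A.

Lemma tu_minor_sqr k (f : 'I_k -> 'I_d) (g : 'I_k -> 'I_n) :
  injective f -> injective g -> \det (mxsub f g A) != 0 ->
  \det (mxsub f g A) * \det (mxsub f g A) = 1.
Proof. by move=> injf injg; have := tuA injf injg; rewrite !inE; lia. Qed.

(* [w] is [e_j0] minus the solution [Y] of [M Y = A_(f, j0)], placed on the columns [g];
   by Cramer's rule its entries are minors of [A], and the singular extended minors
   (Schur complement) give [A w = 0]. *)
Lemma tu_minor_kernel_vector k (f : 'I_k -> 'I_d) (g : 'I_k -> 'I_n) (j0 : 'I_n) :
  injective f -> injective g -> \det (mxsub f g A) != 0 -> (forall t, g t != j0) ->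
  (forall f' : 'I_(k + 1) -> 'I_d, injective f' ->
     \det (mxsub f' (ext_last g j0) A) = 0) ->
  exists w : 'cV[int]_n, [/\ A *m w = 0, forall i, `|w i 0| <= 1, w j0 0 = 1 &
    forall i, w i 0 != 0 -> i = j0 \/ exists t, g t = i].
Proof.
move=> injf injg detM gj0 singular.
set M := mxsub f g A in detM *; have detM2 := tu_minor_sqr injf injg detM.
pose Y : 'cV_k := \det M *: (\adj M *m \col_s A (f s) j0).
pose w : 'cV[int]_n := delta_mx j0 0 - \sum_t Y t 0 *: delta_mx (g t) 0.
have wE i : w i 0 = (i == j0)%:R - \sum_t Y t 0 * (i == g t)%:R.
  rewrite /w !mxE summxE eqxx andbT; congr (_ - _).
  by apply: eq_bigr => t _; rewrite !mxE eqxx andbT.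
have Yb t : `|Y t 0| <= 1.
  have injgt : injective (fun s => if s == t then j0 else g s).
    move=> s1 s2; case: (s1 =P t) => [->|_]; case: (s2 =P t) => [->|_] //.
    - by move=> E; move: (gj0 s2); rewrite E eqxx.
    - by move=> E; move: (gj0 s1); rewrite E eqxx.
    - exact: injg.
  by rewrite /Y mxE adj_mul_col_mxsub; apply: unit_mul_le1 detM2 (tuA injf injgt).
exists w; split.
- apply/matrixP => r j; rewrite (ord1 j) [RHS]mxE.
  have -> : (A *m w) r 0 = A r j0 - \sum_t Y t 0 * A r (g t).
    rewrite /w mulmxBr mulmx_sumr -colE !mxE summxE; congr (_ - _).
    by apply: eq_bigr => t _; rewrite -scalemxAr -colE !mxE.
  have det_ext : \det (mxsub (ext_last f r) (ext_last g j0) A) = 0.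
    case: (boolP (injectiveb (ext_last f r))) => [/injectiveP|/injectivePn [i1 [i2 ne E]]].
      exact: singular.
    by apply: (determinant_alternate ne) => j'; rewrite !mxE E.
  move: det_ext; rewrite mxsub_ext_last det_block_unit // -/M -/Y => /eqP.
  rewrite mulf_eq0 (negbTE detM) /= subr_eq0 mxE => /eqP ->.
  by apply/eqP; rewrite mxE subr_eq0; apply/eqP/eq_bigr => t _; rewrite mxE mulrC.
- move=> i; rewrite wE.
  case: (boolP [exists t, g t == i]) => [/existsP [t0 /eqP <-]|/existsPn not_gi].
    by rewrite sum_delta_image // (negbTE (gj0 t0)) sub0r normrN.
  rewrite sum_delta_notin_image ?subr0; last by move=> t; apply: not_gi.
  by case: (i == j0); rewrite ?normr1 ?normr0.
- by rewrite wE eqxx sum_delta_notin_image ?subr0.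
- move=> i; rewrite wE.
  case: (boolP [exists t, g t == i]) => [/existsP [t /eqP gt] _|/existsPn not_gi].
    by right; exists t.
  rewrite sum_delta_notin_image ?subr0; last by move=> t; apply: not_gi.
  by case: (i =P j0) => [|_]; [left | rewrite eqxx].
Qed.

Lemma tu_unit_kernel_below (z : 'cV[int]_n) : A *m z = 0 -> z != 0 ->
  exists w (j0 : 'I_n), [/\ A *m w = 0, forall i, `|w i 0| <= 1, w j0 0 = 1 &
    sd_supp_sub w z].
Proof.
move=> Az nz.
have [k [f [g [injf injg gS detM maximal]]]] :=
  exists_maximal_minor [pred j | z j 0 != 0].
have [j0 [zj0 gj0]] : exists j0, z j0 0 != 0 /\ forall t, g t != j0.
  apply: NNPP => all_in; move/eqP: nz; apply.
  apply: (kernel_eq0_on_minor_columns injg detM) => // j zj; apply: NNPP => nj.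
  by apply: all_in; exists j; split => // t; apply/eqP => gt; apply: nj; exists t.
have ext_supp t : ext_last g j0 t \in [pred j | z j 0 != 0].
  by rewrite /ext_last; case: split.
have [w [Aw wb wj0 w_supp]] := tu_minor_kernel_vector injf injg detM gj0
  (fun f' injf' => maximal f' _ injf' (ext_last_inj injg gj0) ext_supp).
exists w, j0; split => // i /w_supp [->|[t <-]] //; apply: gS.
Qed.


Lemma exists_support_minimal_below (g : 'cV[int]_n) : A *m g = 0 -> g != 0 ->
  exists w0, [/\ A *m w0 = 0, w0 != 0, sd_supp_sub w0 g &
    forall w, A *m w = 0 -> w != 0 -> sd_supp_sub w w0 -> sd_supp_sub w0 w].
Proof.
move=> Ag ng.
have [m [[w0 [[Aw0 nw0 w0g] w0m]] w0_min]] := ex_minimal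
  (P := fun m => exists w0, [/\ A *m w0 = 0, w0 != 0 & sd_supp_sub w0 g] /\ supp_size w0 = m)
  (ex_intro _ g (conj (And3 Ag ng (fun i gi => gi)) erefl)).
exists w0; split => // w Aw nw ww0 i w0i; apply: NNPP => /negP; rewrite negbK => /eqP wi.
apply: (w0_min (supp_size w)); first by rewrite -w0m; apply: supp_size_lt ww0 w0i wi.
by exists w; split => //; split => // j /ww0; apply: w0g.
Qed.

Lemma tu_conformal_circuit (g : 'cV[int]_n) : A *m g = 0 -> g != 0 ->
  exists z, [/\ sd_circuit A z, forall i, `|z i 0| <= 1,
    forall i, 0 <= z i 0 * g i 0 & sd_supp_sub z g].
Proof.
move: {2}(supp_size g) (leqnn (supp_size g)) => m; elim: m g => [|m IH] g gm Ag ng.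
  have [i gi] : exists i, g i 0 != 0.
    by apply: NNPP => all0; move/eqP: ng; apply; apply/matrixP => i j;
       rewrite (ord1 j) mxE; apply: NNPP => gi; apply: all0; exists i; apply/eqP.
  by move: gm; rewrite leqn0 => /eqP/cards0_eq/setP/(_ i); rewrite !inE gi.
have [w0 [Aw0 nw0 w0g w0_min]] := exists_support_minimal_below Ag ng.
have [w [j0 [Aw wb wj0 ww0]]] := tu_unit_kernel_below Aw0 nw0.
have w_min v : A *m v = 0 -> v != 0 -> sd_supp_sub v w -> sd_supp_sub w v.
  by move=> Av nv vw i /ww0; apply: (w0_min v Av nv) => j /vw /ww0.
have wg : sd_supp_sub w g by move=> i /ww0 /w0g.
have [[s [s2 s_conf]]|[i1 [i2 [pos1 neg2]]]] :
    (exists s : int, s * s = 1 /\ forall i, 0 <= s * w i 0 * g i 0) \/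
    (exists i1 i2, 0 < w i1 0 * g i1 0 /\ w i2 0 * g i2 0 < 0).
  case: (boolP [forall i, 0 <= w i 0 * g i 0]) => [/forallP pos|/forallPn [i2]].
    by left; exists 1; split => [|i]; rewrite ?mulr1 // mul1r.
  rewrite -ltNge => neg2.
  case: (boolP [forall i, w i 0 * g i 0 <= 0]) => [/forallP neg|/forallPn [i1]].
    by left; exists (-1); split => [|i]; rewrite ?mulrNN ?mulr1 // mulN1r mulNr oppr_ge0.
  by rewrite -ltNge => pos1; right; exists i1, i2.
- exists (s *: w); split.
  + apply: (unit_kernel_circuit (j0 := j0)); first by rewrite -scalemxAr Aw scaler0.
    * by move=> i; rewrite mxE normrM; have := wb i; move: s2; nia.
    * by rewrite mxE wj0 mulr1.
    * move=> v Av nv vsw i; rewrite mxE mulf_eq0 negb_or => /andP [_ wi].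
      by apply: (w_min v) => // j /vsw; rewrite mxE mulf_eq0 negb_or => /andP [].
  + by move=> i; rewrite mxE normrM; have := wb i; move: s2; nia.
  + by move=> i; rewrite mxE.
  + by move=> i; rewrite mxE mulf_eq0 negb_or => /andP [_ /wg].
- have [t [nh hg hsupp [i0 [gi0 hi0]]]] := conformal_reduction wb wg pos1 neg2.
  have Ah : A *m (g - t *: w) = 0 by rewrite mulmxBr -scalemxAr Aw Ag scaler0 subrr.
  have hm : (supp_size (g - t *: w) <= m)%N.
    by rewrite -ltnS; apply: leq_trans gm; apply: supp_size_lt hsupp gi0 hi0.
  have [z [Cz zb zh zsupp]] := IH _ hm Ah nh.
  exists z; split => // i; last by move/zsupp/hsupp.
  exact: sign_agree_trans (zh i) (hg i) (zsupp i).
Qed.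

Lemma tu_graver_circuit (g : 'cV[int]_n) : sd_graver A g ->
  sd_circuit A g /\ forall i, `|g i 0| <= 1.
Proof.
move=> [Ag ng g_min].
have [z [Cz zb zg zsupp]] := tu_conformal_circuit Ag ng.
have [Az nz _ _] := Cz.
suff -> : g = z by [].
apply/esym/g_min => // i; split => //.
have [->|zi] := eqVneq (z i 0) 0; first by rewrite normr0.
by have := zsupp i zi; have := zb i; lia.
Qed.

End TotallyUnimodular.

(** * Steepest-descent runs *)

(* An augmentation [y = x + alpha z] with [z] in {-1, 0, 1}^n and [alpha >= 1] is stopped
   by a coordinate [i] where [y + z] leaves the box; there [z i = sgz (y i - x i)]. *)
Definition sd_blocked n (u x y : 'cV[int]_n) (i : 'I_n) : bool :=
  ~~ (0 <= y i 0 + sgz (y i 0 - x i 0) <= u i 0).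

Lemma sd_blocked_boundary n (u x y : 'cV[int]_n) (i : 'I_n) :
  0 <= y i 0 <= u i 0 -> sd_blocked u x y i ->
  y i 0 != x i 0 /\ forall v : int, 0 <= v <= u i 0 -> (v - y i 0) * sgz (y i 0 - x i 0) <= 0.
Proof.
rewrite /sd_blocked => yb.
by case: (sgz_cases (y i 0 - x i 0)) => [[_ ->]|[? ->]|[? ->]]; split; lia.
Qed.

Lemma sd_step_summary d n (A : 'M[int]_(d, n)) b c u (x y : 'cV[int]_n) :
  totally_unimodular A -> sd_step A b c u x y ->
  [/\ sd_feasible A b u y,
      forall g, sd_graver A g -> sd_feasible A b u (x + g) ->
        sd_ratio c g <= sd_ratio c (y - x),
      0 < sd_ratio c (y - x),
      exists2 z, sd_circuit A z & sd_ratio c z = sd_ratio c (y - x) &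
      exists i, sd_blocked u x y i].
Proof.
move=> tuA [z [Gz Fz steep ratio_gt0 [al [Fal al_max ->]]]].
have [Cz zb] := tu_graver_circuit tuA Gz; have [Az _ _] := Gz.
have al_ge1 : 1 <= al by apply: al_max; rewrite scale1r.
have -> : sd_ratio c (x + al *: z - x) = sd_ratio c z.
  by rewrite addrC addKr sd_ratioZ //; lia.
split => //; first by exists z.
have Ax : A *m x = b by case: Fz; rewrite mulmxDr Az addr0.
have infeasible : ~ sd_feasible A b u (x + (al + 1) *: z) by move/al_max; lia.
apply: NNPP => not_blocked; apply: infeasible; split.
  by rewrite mulmxDr -scalemxAr Az scaler0 addr0.
move=> i; case: (boolP (sd_blocked u x (x + al *: z) i)) => [bl|].
  by case: not_blocked; exists i.
rewrite /sd_blocked negbK.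
have -> : sgz ((x + al *: z) i 0 - x i 0) = z i 0.
  rewrite !mxE addrAC subrr add0r.
  case: (unit_intP (zb i)) => ->;
    by rewrite ?mulr0 ?sgz0 ?mulrN ?mulr1 ?sgzN ?gtr0_sgz //; lia.
by rewrite !mxE mulrDl mul1r addrA.
Qed.

Section DescentRun.
Variables (d n : nat) (A : 'M[int]_(d, n)) (b : 'cV[int]_d) (c u : 'cV[int]_n).
Variables (x : nat -> 'cV[int]_n) (K : nat) (vals : seq rat).

Local Notation rate k := (sd_ratio c (x k.+1 - x k)).
Local Notation len k := ((sd_norm1 (x k.+1 - x k))%:~R : rat).

Hypothesis run_feasible : forall k, (k <= K)%N -> sd_feasible A b u (x k).
Hypothesis run_steepest : forall k, (k < K)%N -> forall g, sd_graver A g ->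
  sd_feasible A b u (x k + g) -> sd_ratio c g <= rate k.
Hypothesis run_rate_gt0 : forall k, (k < K)%N -> 0 < rate k.
Hypothesis run_rate_vals : forall k, (k < K)%N -> rate k \in vals.
Hypothesis run_blocked : forall k, (k < K)%N -> exists i, sd_blocked u (x k) (x k.+1) i.

Lemma run_descent_bound k l : (k <= l)%N -> (l < K)%N ->
  \sum_(k <= m < l.+1) rate m * len m <= rate k * (sd_norm1 (x l.+1 - x k))%:~R.
Proof.
move=> le_kl lt_lK; have lt_kK := leq_ltn_trans le_kl lt_lK.
have := sd_cost_graver_bound (run_feasible (ltnW lt_kK)) (run_steepest lt_kK)
  (h := x l.+1 - x k).
rewrite addrC subrK => /(_ (run_feasible lt_lK)); apply: le_trans.
under eq_bigr => m _ do rewrite -sd_ratioK.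
rewrite -rmorph_sum sumrN; under eq_bigr => m _ do rewrite sd_costB.
by rewrite telescope_sumr ?sd_costB // leqW.
Qed.

Lemma run_rate_le_succ k : (k.+1 < K)%N -> rate k.+1 <= rate k.
Proof.
move=> lt_k1K; have lt_kK := ltnW lt_k1K.
have := run_descent_bound (leqnSn k) lt_k1K; rewrite big_nat_recr //= big_nat1.
have tri : sd_norm1 (x k.+2 - x k) <=
    sd_norm1 (x k.+1 - x k) + sd_norm1 (x k.+2 - x k.+1).
  by rewrite -[x k.+2 - x k](subrKA (x k.+1)) addrC sd_norm1D.
have len_gt0 : 0 < len k.+1.
  by rewrite ltr0z sd_norm1_gt0; apply: sd_ratio_gt0_neq0 (run_rate_gt0 lt_k1K).
move=> bound.
have : rate k * len k + rate k.+1 * len k.+1 <= rate k * len k + rate k * len k.+1.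
  apply: le_trans bound _.
  by rewrite -mulrDr ler_pM2l ?run_rate_gt0 // -intrD ler_int.
by rewrite lerD2l ler_pM2r.
Qed.

Lemma run_rate_nonincreasing k l : (k <= l)%N -> (l < K)%N -> rate l <= rate k.
Proof.
elim: l => [|l IH]; first by rewrite leqn0 => /eqP -> _.
rewrite leq_eqVlt => /orP [/eqP -> _ //|lt_kl lt_lK].
exact: le_trans (run_rate_le_succ lt_lK) (IH lt_kl (ltnW lt_lK)).
Qed.

Lemma run_blocked_reversal k k' i : (k < k')%N -> (k' < K)%N ->
  sd_blocked u (x k) (x k.+1) i -> sd_blocked u (x k') (x k'.+1) i ->
  exists2 l, (k < l <= k')%N & (x l.+1 i 0 - x l i 0) * sgz (x k.+1 i 0 - x k i 0) < 0.
Proof.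
move=> lt_kk' lt_k'K blk blk'; set s := sgz (x k.+1 i 0 - x k i 0).
have [_ xk1b] := run_feasible (leq_trans lt_kk' (ltnW lt_k'K)).
have [_ xk'1b] := run_feasible lt_k'K.
have [moved_k boundary] := sd_blocked_boundary (xk1b i) blk.
have [moved_k' _] := sd_blocked_boundary (xk'1b i) blk'.
apply: NNPP => no_reversal.
have nonneg m : (k < m <= k')%N -> 0 <= (x m.+1 i 0 - x m i 0) * s.
  by move=> km; rewrite leNgt; apply/negP => neg; apply: no_reversal; exists m.
have last_pos : 0 < (x k'.+1 i 0 - x k' i 0) * s.
  have nz : (x k'.+1 i 0 - x k' i 0) * s != 0.
    by apply: mulf_neq0; rewrite ?sgz_eq0 subr_eq0.
  by rewrite lt_def nz nonneg // lt_kk' /=.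
have sum_ge : (x k'.+1 i 0 - x k' i 0) * s <= (x k'.+1 i 0 - x k.+1 i 0) * s.
  have tel : \sum_(k.+1 <= m < k'.+1) (x m.+1 i 0 - x m i 0) = x k'.+1 i 0 - x k.+1 i 0.
    by rewrite (telescope_sumr (fun m => x m i 0)) // leqW.
  rewrite -tel mulr_suml big_nat_recr //= lerDr big_nat_cond.
  apply: sumr_ge0 => m /andP [/andP [km mk'] _].
  by apply: nonneg; rewrite km (ltnW mk').
by have := lt_le_trans last_pos (le_trans sum_ge (boundary _ (xk'1b i))); rewrite ltxx.
Qed.

Lemma run_rate_drops k k' i : (k < k')%N -> (k' < K)%N ->
  sd_blocked u (x k) (x k.+1) i -> sd_blocked u (x k') (x k'.+1) i -> rate k' < rate k.
Proof.
move=> lt_kk' lt_k'K blk blk'; have lt_kK := ltn_trans lt_kk' lt_k'K.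
rewrite lt_neqAle run_rate_nonincreasing ?(ltnW lt_kk') // andbT; apply/eqP => same.
have [l /andP [lt_kl le_lk'] rev] := run_blocked_reversal lt_kk' lt_k'K blk blk'.
have lt_lK := leq_ltn_trans le_lk' lt_k'K.
have rate_const m : (k <= m < l.+1)%N -> rate m = rate k.
  rewrite ltnS => /andP [km ml]; have lt_mK := leq_ltn_trans ml lt_lK.
  apply/eqP; rewrite eq_le run_rate_nonincreasing //= -same.
  by rewrite run_rate_nonincreasing // (leq_trans ml le_lk').
have opposite : (x k.+1 - x k) i 0 * (x l.+1 - x l) i 0 < 0.
  rewrite !mxE; move: rev; move: (x k.+1 i 0 - x k i 0) (x l.+1 i 0 - x l i 0) => p q.
  by case: (sgz_cases p) => [[_ ->]|[? ->]|[? ->]]; nia.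
have strict : sd_norm1 (x l.+1 - x k) < \sum_(k <= m < l.+1) sd_norm1 (x m.+1 - x m).
  have -> : x l.+1 - x k = (x k.+1 - x k) + (x l - x k.+1) + (x l.+1 - x l).
    by apply/matrixP => p q; rewrite !mxE; ring.
  apply: lt_le_trans (sd_norm1_lt_opposite _ opposite) _.
  rewrite big_ltn; last by rewrite ltnS (ltnW lt_kl).
  by rewrite big_nat_recr //= addrA lerD2r lerD2l sd_norm1_telescope.
have := run_descent_bound (ltnW lt_kl) lt_lK.
rewrite (@eq_big_nat _ _ _ k l.+1 _ (fun m => rate k * len m)); last first.
  by move=> m /rate_const ->.
by rewrite -mulr_sumr ler_pM2l ?run_rate_gt0 // -rmorph_sum ler_int leNgt strict.
Qed.

Lemma run_length_bound : (K <= n * size vals)%N.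
Proof.
pose key k := (rate k, [pick i | sd_blocked u (x k) (x k.+1) i]).
have key_some k : (k < K)%N -> exists2 i, key k = (rate k, Some i) &
    sd_blocked u (x k) (x k.+1) i.
  move=> lt_kK; have [i blk] := run_blocked lt_kK.
  by rewrite /key; case: pickP => [j bj|/(_ i)]; [exists j | rewrite blk].
have key_inj : {in iota 0 K &, injective key}.
  move=> k k'; rewrite !mem_iota !add0n /= => lt_kK lt_k'K.
  wlog lt_kk' : k k' lt_kK lt_k'K / (k < k')%N.
    move=> W eq_key; case: (ltngtP k k') => [lt|lt|//].
      exact: W.
    by apply/esym/W.
  have [i -> blk] := key_some k lt_kK; have [i' -> blk'] := key_some k' lt_k'K.
  case=> same_rate eq_i; subst i'; have := run_rate_drops lt_kk' lt_k'K blk blk'.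
  by rewrite same_rate ltxx.
have keys_in :
    {subset map key (iota 0 K) <= [seq (q, Some i) | q <- vals, i <- enum 'I_n]}.
  move=> key_k /mapP [k]; rewrite mem_iota add0n => lt_kK ->.
  have [i -> _] := key_some k lt_kK.
  by apply: allpairs_f; [exact: run_rate_vals | rewrite mem_enum].
have := uniq_leq_size _ keys_in; rewrite map_inj_in_uniq ?iota_uniq //.
by rewrite size_map size_iota size_allpairs size_enum_ord mulnC; apply.
Qed.

End DescentRun.

Theorem corollary3 (d n : nat) (A : 'M[int]_(d, n)) (b : 'cV[int]_d)
  (c u : 'cV[int]_n) (vals : seq rat) (x : nat -> 'cV[int]_n) (K : nat) :
  totally_unimodular A ->
  (forall i, 0 <= u i 0) ->
  uniq vals ->
  (forall q : rat, q \in vals <-> (0 < q /\ exists z, sd_circuit A z /\ sd_ratio c z = q)) ->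
  sd_feasible A b u (x 0%N) ->
  (forall k, (k < K)%N -> sd_step A b c u (x k) (x k.+1)) ->
  (K <= n * size vals)%N /\ (sd_stopped A b c u (x K) -> sd_optimal A b c u (x K)).
Proof.
move=> tuA _ _ vals_spec feas0 steps.
have summary k (lt_kK : (k < K)%N) := sd_step_summary tuA (steps k lt_kK).
have feas k : (k <= K)%N -> sd_feasible A b u (x k).
  by elim: k => // k IH lt_kK; case: (summary k lt_kK).
split; last exact: sd_stopped_optimal (feas K (leqnn K)).
apply: (run_length_bound (c := c) feas).
- by move=> k /summary [_ steep _ _ _].
- by move=> k /summary [_ _ pos _ _].
- move=> k /summary [_ _ pos [z Cz ratio_z] _].
  by apply/vals_spec; split => //; exists z.
- by move=> k /summary [_ _ _ _ blk].
Qed.
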